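(* Let $\alpha,\beta,\delta\in(0,1)$, $m=\alpha n^\beta$, $\lambda^*=\frac{\log_2(1+\delta)}{1-\beta}$, $\lambda<\lambda^*$, and $k>0$. Then $$\lim_{n\to\infty}\sum_{1\le w\le\lambda m/\log_2 n}\binom{n}{w}\frac{1}{2^m}\left(1+\left(1-2\frac{k(\log_2 m)^2}{m}\right)^w\right)^m=0.$$ *)

From HB Require Import structures.
From mathcomp Require Import all_boot all_order all_algebra.
From mathcomp Require Import all_classical all_reals all_analysis.
Set Implicit Arguments. Unset Strict Implicit. Unset Printing Implicit Defensive.
Import Order.TTheory GRing.Theory Num.Theory.
Local Open Scope ring_scope.

Definition log2 {R : realType} (x : R) : R := ln x / ln 2.

Definition mval {R : realType} (alpha beta : R) (n : nat) : R :=
  alpha * (n%:R `^ beta).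

(* the n-th partial expression:
   sum_{1 <= w <= lambda m / log2 n} C(n,w) 2^{-m} (1 + (1 - 2 k (log2 m)^2 / m)^w)^m.
   Terms with w > n vanish since 'C(n,w) = 0, so w ranges over 1..n. *)
Definition lemma11_sum {R : realType} (alpha beta lambda k : R) (n : nat) : R :=
  let m := mval alpha beta n in
  \sum_(1 <= w < n.+1 | w%:R <= lambda * m / log2 n%:R)
     'C(n, w)%:R * (2 `^ m)^-1 *
     ((1 + (1 - 2 * (k * (log2 m) ^+ 2) / m) ^+ w) `^ m).

From HB Require Import structures.
From mathcomp Require Import all_boot all_order all_algebra.
From mathcomp Require Import all_classical all_reals all_analysis.
From mathcomp Require Import lra ring.
Import numFieldNormedType.Exports.
Import Order.TTheory GRing.Theory Num.Theory.
Local Open Scope classical_set_scope.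
Local Open Scope ring_scope.

(* Put t = ln n, so that m = alpha e^(beta t), and eps = 2 k (log2 m)^2 / m = Q / m,
   s = eps w, y = (1 - eps)^w; then y (1 + s) <= 1 and the w-th term of the sum is
   C(n, w) exp(m (ln (1 + y) - ln 2)).
   For w t <= m ln 2 / 8 we use C(n, w) <= n^w = e^(w t) and
   ln ((1 + y) / 2) <= - min(s, 1) / 4: the term is at most e^(t - Q/4) or e^(-m/8).
   For larger w we use C(n, w) <= (e n / w)^w and ln (1 + y) <= 1 / s; together with
   m ln 2 / (8 t) < w <= lambda m ln 2 / t the exponent is at most
   m (lambda (1 - beta) ln 2 - ln 2 + o(1)) <= - gamma m / 2, where
   gamma = ln 2 (1 - lambda (1 - beta)) > 0 because lambda (1 - beta) < log2 (1 + delta) < 1.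
   As Q grows like t^2 and m like e^(beta t), even n = e^t times the bound on a single
   term tends to 0.  The sum is monotone in lambda, so lambda may be enlarged to be
   positive. *)

Lemma ln2_gt0 (R : realType) : 0 < ln (2 : R).
Proof. by rewrite ln_gt0 // ltr1n. Qed.

Lemma ln2_le1 (R : realType) : ln (2 : R) <= 1.
Proof. by have := @le_ln1Dx R 1; rewrite (_ : 1 + 1 = 2) //; apply; lra. Qed.

Lemma ffact_leq_expn (n w : nat) : (n ^_ w <= n ^ w)%N.
Proof.
elim: w => [|w IH]; first by rewrite ffactn0 expn0.
by rewrite ffactnSr expnS mulnC leq_mul // leq_subr.
Qed.

Lemma binR_le_expR_ln (R : realType) (n w : nat) : (0 < n)%N ->
  ('C(n, w)%:R : R) <= expR (w%:R * ln n%:R).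
Proof.
move=> n_gt0; rewrite expRM_natl lnK ?posrE ?ltr0n // -natrX ler_nat.
by apply: leq_trans (ffact_leq_expn n w); rewrite -bin_ffact leq_pmulr ?fact_gt0.
Qed.

Lemma binR_le_expR_ln_ediv (R : realType) (n w : nat) : (0 < n)%N -> (0 < w)%N ->
  ('C(n, w)%:R : R) <= expR (w%:R * (1 + ln n%:R - ln w%:R)).
Proof.
move=> n_gt0 w_gt0.
have w_pos : (0 : R) < w%:R ^+ w by rewrite exprn_gt0 ?ltr0n.
have bin_fact : ('C(n, w)%:R : R) * w`!%:R <= n%:R ^+ w.
  by rewrite -natrM -natrX ler_nat bin_ffact ffact_leq_expn.
have pow_fact : (w%:R : R) ^+ w <= w`!%:R * expR w%:R.
  case: w w_gt0 {w_pos bin_fact} => // w _.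
  rewrite -ler_pdivrMl ?ltr0n ?fact_gt0 // mulrC.
  by apply: le_trans (expR_ge1Dxn w (ler0n R w.+1)); rewrite lerDr.
have -> : (w%:R : R) * (1 + ln n%:R - ln w%:R)
    = w%:R + w%:R * ln n%:R - w%:R * ln w%:R by ring.
rewrite expRD expRN expRD !expRM_natl !lnK ?posrE ?ltr0n // ler_pdivlMr //.
apply: le_trans (ler_wpM2l (ler0n _ _) pow_fact) _.
by rewrite mulrA mulrC ler_wpM2l ?expR_ge0.
Qed.

Lemma expr_subr_mul_le1 {R : realType} (eps : R) (w : nat) : 0 <= eps <= 1 ->
  (1 - eps) ^+ w * (1 + eps * w%:R) <= 1.
Proof.
move=> /andP[eps_ge0 eps_le1].
have pow_le : (1 - eps) ^+ w <= expR (- (eps * w%:R)).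
  rewrite -mulNr expRM_natr lerXn2r ?nnegrE ?expR_ge0 ?subr_ge0 //.
  by have := expR_ge1Dx (- eps); lra.
have s_ge0 : 0 <= 1 + eps * w%:R by have := ler0n R w; nra.
apply: le_trans (ler_wpM2r s_ge0 pow_le) _.
have := expR_ge1Dx (eps * w%:R); have := expRxMexpNx_1 (eps * w%:R).
have := expR_ge0 (- (eps * w%:R)); nra.
Qed.

Lemma ln_half_addr_le {R : realType} (y s : R) :
  0 <= y -> 0 <= s -> y * (1 + s) <= 1 -> ln (1 + y) - ln 2 <= - Num.min s 1 / 4.
Proof.
move=> y_ge0 s_ge0 ys_le1.
have -> : ln (1 + y) - ln 2 = ln (1 + (y - 1) / 2).
  by rewrite -ln_div ?posrE; [congr ln; field | lra | lra].
apply: le_trans (le_ln1Dx _) _; first lra.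
have [s_le1|s_gt1] := leP s 1.
- have s_sqr_le : s * s <= s by nra.
  have prod_ge0 : 0 <= (2 - 2 * y - s) * (1 + s) by nra.
  rewrite pmulr_lge0 in prod_ge0; lra.
- nra.
Qed.

Lemma ln_addr_le_inv {R : realType} (y s : R) :
  0 <= y -> 0 < s -> y * (1 + s) <= 1 -> ln (1 + y) <= s^-1.
Proof.
move=> y_ge0 s_gt0 ys_le1.
apply: le_trans (le_ln1Dx _) _; first lra.
by rewrite -[s^-1]mul1r ler_pdivlMr //; nra.
Qed.

Lemma pow2_powR_expR (R : realType) (C m x : R) : 0 < 1 + x ->
  C * (2 `^ m)^-1 * (1 + x) `^ m = C * expR (m * (ln (1 + x) - ln 2)).
Proof.
move=> x_gt.
rewrite /powR (gt_eqF x_gt) (_ : (2 : R) == 0 = false); last by apply: gt_eqF; lra.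
by rewrite mulrBr expRD expRN; ring.
Qed.

Lemma term_le_small_w {R : realType} {t m Q C : R} {w : nat} :
  0 < m -> 0 <= Q <= m -> (0 < w)%N -> C <= expR (w%:R * t) ->
  w%:R * t <= m * ln 2 / 8 -> t <= Q / 4 ->
  C * expR (m * (ln (1 + (1 - Q / m) ^+ w) - ln 2))
    <= expR (t - Q / 4) + expR (- (m / 8)).
Proof.
move=> m_gt0 /andP[Q_ge0 Q_le] w_gt0 C_le small_w t_le.
have eps01 : 0 <= Q / m <= 1 by rewrite divr_ge0 ?(ltW m_gt0) //= ler_pdivrMr // mul1r.
have y_ge0 : 0 <= (1 - Q / m) ^+ w by case/andP: eps01 => _ ?; rewrite exprn_ge0 ?subr_ge0.
set s := Q / m * w%:R.
have s_ge0 : 0 <= s by rewrite mulr_ge0 ?ler0n ?divr_ge0 ?(ltW m_gt0).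
have ms : m * s = Q * w%:R by rewrite /s mulrA [m * _]mulrC divfK ?gt_eqF.
have := ln_half_addr_le _ _ y_ge0 s_ge0 (expr_subr_mul_le1 _ w eps01).
set X := ln _ - ln 2 => X_le.
apply: le_trans (_ : expR (w%:R * t + m * X) <= _).
  by rewrite expRD ler_wpM2r ?expR_ge0.
have w_ge1 : 1 <= w%:R :> R by rewrite ler1n.
have := expR_ge0 (t - Q / 4); have := expR_ge0 (- (m / 8)).
move: X_le; have [s_le1|s_gt1] := leP s 1 => X_le expR_ge0_m expR_ge0_t.
- have mX : m * X <= - (m * s) / 4 by have := ler_wpM2l (ltW m_gt0) X_le; lra.
  have w_t : w%:R * t + Q / 4 <= t + w%:R * (Q / 4) by nra.
  have : expR (w%:R * t + m * X) <= expR (t - Q / 4) by rewrite ler_expR; lra.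
  lra.
- have mX : m * X <= - m / 4 by have := ler_wpM2l (ltW m_gt0) X_le; lra.
  have m_ln2 : m * ln 2 <= m by rewrite ler_piMr ?(ltW m_gt0) ?ln2_le1.
  have : expR (w%:R * t + m * X) <= expR (- (m / 8)).
    by rewrite ler_expR; lra.
  lra.
Qed.

Lemma term_le_large_w {R : realType} {t m Q C lam : R} {w : nat} :
  0 < t -> 0 < m -> 0 < Q <= m -> (0 < w)%N -> ln w%:R <= t ->
  C <= expR (w%:R * (1 + t - ln w%:R)) ->
  m * ln 2 / 8 < w%:R * t -> w%:R <= lam * m * ln 2 / t ->
  C * expR (m * (ln (1 + (1 - Q / m) ^+ w) - ln 2))
    <= expR (m * (lam * ln 2 * (1 + t - ln (m * ln 2 / (8 * t))) / t
                  + 8 * t / (Q * ln 2) - ln 2)).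
Proof.
move=> t_gt0 m_gt0 /andP[Q_gt0 Q_le] w_gt0 lnw_le C_le large_w w_le.
have Q_ge0 := ltW Q_gt0.
have ln2_gt0 := ln2_gt0 R.
have w_gt : m * ln 2 / (8 * t) < w%:R by rewrite ltr_pdivrMr; lra.
set D := 1 + t - ln (m * ln 2 / (8 * t)).
have D_ge : 1 + t - ln w%:R <= D.
  suff : ln (m * ln 2 / (8 * t)) < ln w%:R by rewrite /D; lra.
  by rewrite ltr_ln ?posrE ?ltr0n // divr_gt0 ?mulr_gt0 //; lra.
have entropy : w%:R * (1 + t - ln w%:R) <= lam * m * ln 2 / t * D.
  apply: le_trans (ler_wpM2l (ler0n _ _) D_ge) _.
  by rewrite ler_wpM2r //; lra.
have eps01 : 0 <= Q / m <= 1.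
  by rewrite divr_ge0 ?(ltW m_gt0) //= ler_pdivrMr // mul1r.
have y_ge0 : 0 <= (1 - Q / m) ^+ w by case/andP: eps01 => _ ?; rewrite exprn_ge0 ?subr_ge0.
set s := Q / m * w%:R.
have s_gt : Q * ln 2 / (8 * t) < s.
  rewrite (_ : Q * ln 2 / (8 * t) = Q / m * (m * ln 2 / (8 * t))).
    by rewrite ltr_pM2l ?divr_gt0.
  by field; rewrite !gt_eqF.
have s_gt0 : 0 < s by apply: lt_trans s_gt; rewrite divr_gt0 ?mulr_gt0 //; lra.
have ln_le := ln_addr_le_inv _ _ y_ge0 s_gt0 (expr_subr_mul_le1 _ w eps01).
have inv_s : s^-1 <= 8 * t / (Q * ln 2).
  rewrite -invf_div; apply: ltW.
  by rewrite ltf_pV2 ?posrE // divr_gt0 ?mulr_gt0 //; lra.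
apply: le_trans (_ : expR (w%:R * (1 + t - ln w%:R)
                           + m * (ln (1 + (1 - Q / m) ^+ w) - ln 2)) <= _).
  by rewrite expRD ler_wpM2r ?expR_ge0.
rewrite ler_expR.
have -> : m * (lam * ln 2 * D / t + 8 * t / (Q * ln 2) - ln 2)
    = lam * m * ln 2 / t * D + m * (8 * t / (Q * ln 2)) - m * ln 2 by ring.
have m_ln_le : m * ln (1 + (1 - Q / m) ^+ w) <= m * (8 * t / (Q * ln 2)).
  by rewrite ler_wpM2l ?(ltW m_gt0) //; apply: le_trans inv_s.
lra.
Qed.

Lemma natr_gt0_of_ln_gt0 {R : realType} {n : nat} : 0 < ln (n%:R : R) -> (0 < n)%N.
Proof. by case: n => // t_gt0; rewrite ln0 ?ltxx in t_gt0. Qed.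

Lemma near_ln_natr {R : realType} {P : R -> Prop} :
  (\forall t \near +oo, P t) -> \forall n \near \oo, P (ln n%:R).
Proof.
move=> [M [M_real PM]].
have /cvgryPgt /(_ (expR M)) := @cvgr_idn R.
apply: filterS => n n_gt; apply: PM.
by rewrite -ltr_expR lnK // posrE (lt_trans (expR_gt0 M)).
Qed.

Lemma near_pinfty_ge_mulr {R : realType} (a b : R) : 0 < a ->
  \forall t \near +oo, b <= a * t.
Proof.
move=> a_gt0; apply: filterS (nbhs_pinfty_ge (num_real (b / a))) => t ba_le.
by rewrite mulrC -ler_pdivrMr.
Qed.

Lemma near_pinfty_ln_le {R : realType} (c eps : R) : 0 < eps ->
  \forall t \near +oo, c + ln t <= eps * t.
Proof.
move=> eps_gt0; have eps2_gt0 : 0 < eps / 2 by rewrite divr_gt0.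
near=> t.
have t_gt0 : 0 < t by near: t; apply: nbhs_pinfty_gt; exact: num_real.
have c_le : c - 1 - ln (eps / 2) <= eps / 2 * t by near: t; exact: near_pinfty_ge_mulr.
have ln_le : ln (eps / 2 * t) <= eps / 2 * t - 1.
  have := @le_ln1Dx R (eps / 2 * t - 1); rewrite addrCA subrr addr0; apply.
  by have := mulr_gt0 eps2_gt0 t_gt0; lra.
rewrite lnM ?posrE // in ln_le; lra.
Unshelve. all: end_near.
Qed.

Definition grows_quadratically {R : realType} (f : R -> R) :=
  exists2 a : R, 0 < a & \forall t \near +oo, a * t ^+ 2 <= f t.

Lemma grows_quadratically_scale {R : realType} (f : R -> R) (c : R) : 0 < c ->
  grows_quadratically f -> grows_quadratically (fun t => c * f t).
Proof.
move=> c_gt0 [a a_gt0 f_ge]; exists (c * a); first exact: mulr_gt0.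
by apply: filterS f_ge => t; rewrite -mulrA ler_pM2l.
Qed.

Lemma grows_quadratically_linear_le {R : realType} (f : R -> R) (b c : R) :
  grows_quadratically f -> \forall t \near +oo, b * t + c <= f t.
Proof.
move=> [a a_gt0 f_ge]; near=> t.
have t_ge1 : 1 <= t by near: t; apply: nbhs_pinfty_ge; exact: num_real.
have bc_le : `|b| + `|c| <= a * t by near: t; exact: near_pinfty_ge_mulr.
have ft_ge : a * (t * t) <= f t by rewrite -expr2; near: t; exact: f_ge.
have bt_le : b * t <= `|b| * t by rewrite ler_wpM2r ?ler_norm //; lra.
have c_le : c <= `|c| * t by have := ler_norm c; have := normr_ge0 c; nra.
have bct_le : (`|b| + `|c|) * t <= a * t * t by rewrite ler_wpM2r //; lra.
lra.
Unshelve. all: end_near.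
Qed.

Lemma lemma11_sum_ge0 (R : realType) (alpha beta lam k : R) (n : nat) :
  0 <= lemma11_sum alpha beta lam k n.
Proof. by apply: sumr_ge0 => w _; rewrite !mulr_ge0 ?invr_ge0 ?powR_ge0. Qed.

Lemma lemma11_sum_le_lambda (R : realType) (alpha beta lam lam' k : R) (n : nat) :
  0 <= alpha -> lam <= lam' ->
  lemma11_sum alpha beta lam k n <= lemma11_sum alpha beta lam' k n.
Proof.
move=> alpha_ge0 lam_le; rewrite /lemma11_sum [leLHS]big_mkcond [leRHS]big_mkcond /=.
apply: ler_sum => w _.
have m_ge0 : 0 <= mval alpha beta n by rewrite mulr_ge0 ?powR_ge0.
have log_ge0 : 0 <= log2 (n%:R : R).
  rewrite divr_ge0 ?(ltW (ln2_gt0 R)) //.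
  by case: n {m_ge0} => [|n]; [rewrite ln0 | rewrite ln_ge0 // ler1n].
case: ifP => [w_le|_]; last by case: ifP => _; rewrite ?mulr_ge0 ?invr_ge0 ?powR_ge0.
rewrite ifT //; apply: le_trans w_le _.
by rewrite -!mulrA; apply: ler_wpM2r => //; rewrite mulrA; exact: divr_ge0.
Qed.

Section Lemma11Sum.
Variables (R : realType) (alpha beta k lam : R).
Hypotheses (alpha_gt0 : 0 < alpha) (beta_gt0 : 0 < beta) (k_gt0 : 0 < k)
  (lam_gt0 : 0 < lam) (lam_lt : lam * (1 - beta) < 1).

(* With t = ln n: L t = ln m, M t = m, Q t = 2 k (log2 m)^2, U t bounds each term of
   the sum, and M t * F t bounds the exponent of a term with large w. *)
Let L (t : R) := ln alpha + beta * t.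
Let M (t : R) := expR (L t).
Let Q (t : R) := 2 * k / ln 2 ^+ 2 * L t ^+ 2.
Let gam := ln 2 * (1 - lam * (1 - beta)).
Let F (t : R) := lam * ln 2 * (1 + t - ln (M t * ln 2 / (8 * t))) / t
                 + 8 * t / (Q t * ln 2) - ln 2.
Let U (t : R) := expR (t - Q t / 4) + expR (- (M t / 8)) + expR (- (gam / 2 * M t)).

Let q_gt0 : 0 < 2 * k / ln 2 ^+ 2.
Proof. by rewrite divr_gt0 ?mulr_gt0 ?exprn_gt0 ?ln2_gt0. Qed.

Let gam_gt0 : 0 < gam.
Proof. by rewrite mulr_gt0 ?ln2_gt0 // subr_gt0. Qed.

Let near_L_ge (c : R) : \forall t \near +oo, c <= L t.
Proof.
near=> t; have : c - ln alpha <= beta * t by near: t; exact: near_pinfty_ge_mulr.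
by rewrite /L; lra.
Unshelve. all: end_near.
Qed.

Let near_L_ge_half : \forall t \near +oo, beta / 2 * t <= L t.
Proof.
have beta2_gt0 : 0 < beta / 2 by rewrite divr_gt0.
near=> t; have : - ln alpha <= beta / 2 * t by near: t; exact: near_pinfty_ge_mulr.
by rewrite /L; lra.
Unshelve. all: end_near.
Qed.

Let near_mul_sqr_L_le_M (c : R) : \forall t \near +oo, c * L t ^+ 2 <= M t.
Proof.
near=> t.
have L_ge0 : 0 <= L t by near: t; exact: near_L_ge.
have L_ge : 6 * c <= L t by near: t; exact: near_L_ge.
have cube_le : L t ^+ 3 / 6 <= M t.
  by have := expR_ge1Dxn 2 L_ge0; rewrite /M (_ : 3`!%:R = 6 :> R) //; lra.
apply: le_trans cube_le.
have : 0 <= L t ^+ 2 * (L t - 6 * c) by rewrite mulr_ge0 ?sqr_ge0 ?subr_ge0.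
rewrite (exprS _ 2); lra.
Unshelve. all: end_near.
Qed.

Let grows_quadratically_M : grows_quadratically M.
Proof.
exists ((beta / 2) ^+ 2); first by rewrite exprn_gt0 ?divr_gt0.
near=> t.
have t_ge0 : 0 <= t by near: t; apply: nbhs_pinfty_ge; exact: num_real.
have L_ge : beta / 2 * t <= L t by near: t; exact: near_L_ge_half.
have LM : 1 * L t ^+ 2 <= M t by near: t; exact: near_mul_sqr_L_le_M.
have bt_ge0 : 0 <= beta / 2 * t by rewrite mulr_ge0 ?divr_ge0 ?(ltW beta_gt0).
rewrite mul1r in LM; rewrite -exprMn; apply: le_trans LM.
by rewrite lerXn2r ?nnegrE //; apply: le_trans L_ge.
Unshelve. all: end_near.
Qed.

Let grows_quadratically_Q : grows_quadratically Q.
Proof.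
exists (2 * k / ln 2 ^+ 2 * (beta / 2) ^+ 2).
  by rewrite mulr_gt0 ?q_gt0 ?exprn_gt0 ?divr_gt0.
near=> t.
have t_ge0 : 0 <= t by near: t; apply: nbhs_pinfty_ge; exact: num_real.
have L_ge : beta / 2 * t <= L t by near: t; exact: near_L_ge_half.
have bt_ge0 : 0 <= beta / 2 * t by rewrite mulr_ge0 ?divr_ge0 ?(ltW beta_gt0).
by rewrite -mulrA -exprMn ler_pM2l ?q_gt0 // lerXn2r ?nnegrE //; apply: le_trans L_ge.
Unshelve. all: end_near.
Qed.

Let near_Q_gt0 : \forall t \near +oo, 0 < Q t.
Proof.
apply: filterS (near_L_ge 1) => t L_ge1.
by rewrite /Q mulr_gt0 ?q_gt0 ?exprn_gt0 //; lra.
Qed.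

Let near_F_le : \forall t \near +oo, F t <= - (gam / 2).
Proof.
have ln2_gt0 := ln2_gt0 R.
set K := 1 - ln alpha - ln (ln (2 : R)) + ln 8.
set eps := gam / 4 / (lam * ln 2).
have eps_gt0 : 0 < eps by rewrite !divr_gt0 ?mulr_gt0 ?subr_gt0.
have Qg := grows_quadratically_scale _ _ (mulr_gt0 gam_gt0 ln2_gt0) grows_quadratically_Q.
near=> t.
have t_gt0 : 0 < t by near: t; apply: nbhs_pinfty_gt; exact: num_real.
have Q_gt0 : 0 < Q t by near: t; exact: near_Q_gt0.
have ln_le : K + ln t <= eps * t by near: t; exact: near_pinfty_ln_le.
have Q_ge : 32 * t + 0 <= gam * ln 2 * Q t by near: t; exact: grows_quadratically_linear_le.
have lnE : ln (M t * ln 2 / (8 * t)) = L t + ln (ln 2) - ln 8 - ln t.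
  rewrite ln_div ?posrE ?mulr_gt0 ?expR_gt0 // !lnM ?posrE ?expR_gt0 // expRK.
  ring.
have FE : F t = ln 2 - gam + lam * ln 2 * (K + ln t) / t + 8 * t / (Q t * ln 2) - ln 2.
  by rewrite /F lnE /gam /K /L; field; rewrite !gt_eqF.
have ln_part_le : lam * ln 2 * (K + ln t) / t <= gam / 4.
  rewrite ler_pdivrMr // (_ : gam / 4 * t = lam * ln 2 * (eps * t)).
    by apply: ler_wpM2l ln_le; rewrite mulr_ge0 ?(ltW lam_gt0) ?(ltW ln2_gt0).
  by rewrite /eps; field; rewrite !gt_eqF.
have Q_part_le : 8 * t / (Q t * ln 2) <= gam / 4.
  suff le8 : 8 * t <= gam / 4 * (Q t * ln 2) by rewrite ler_pdivrMr // mulr_gt0.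
  lra.
rewrite FE; lra.
Unshelve. all: end_near.
Qed.

Let near_expR_U_le (e : R) : 0 < e -> \forall t \near +oo, expR t * U t <= e.
Proof.
move=> e_gt0; have e3_gt0 : 0 < e / 3 by rewrite divr_gt0.
set E := ln (e / 3).
have expR_le (x : R) : x <= E -> expR x <= e / 3.
  by move=> x_le; rewrite -[e / 3]lnK ?posrE // ler_expR.
have Mg := grows_quadratically_scale _ _ (divr_gt0 gam_gt0 (ltr0Sn R 1)) grows_quadratically_M.
near=> t.
have Q_ge : 8 * t + - (4 * E) <= Q t.
  by near: t; exact: grows_quadratically_linear_le grows_quadratically_Q.
have M_ge : 8 * t + - (8 * E) <= M t.
  by near: t; exact: grows_quadratically_linear_le grows_quadratically_M.
have gM_ge : 1 * t + - E <= gam / 2 * M t.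
  by near: t; exact: grows_quadratically_linear_le Mg.
have := expR_le (t + (t - Q t / 4)); have := expR_le (t + - (M t / 8)).
have := expR_le (t + - (gam / 2 * M t)).
rewrite /U !mulrDr -!expRD; lra.
Unshelve. all: end_near.
Qed.

Let admissible (t : R) :=
  [/\ 0 < t, 0 < Q t, Q t <= M t, t <= Q t / 4 & F t <= - (gam / 2)].

Let near_admissible : \forall t \near +oo, admissible t.
Proof.
near=> t; split.
- by near: t; apply: nbhs_pinfty_gt; exact: num_real.
- by near: t; exact: near_Q_gt0.
- by near: t; exact: (near_mul_sqr_L_le_M (2 * k / ln 2 ^+ 2)).
- suff : 4 * t + 0 <= Q t by lra.
  by near: t; exact: grows_quadratically_linear_le grows_quadratically_Q.
- by near: t; exact: near_F_le.
Unshelve. all: end_near.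
Qed.

Let lemma11_term_le (n w : nat) : admissible (ln n%:R) -> (0 < w <= n)%N ->
  w%:R <= lam * M (ln n%:R) * ln 2 / ln n%:R ->
  'C(n, w)%:R * expR (M (ln n%:R)
                       * (ln (1 + (1 - Q (ln n%:R) / M (ln n%:R)) ^+ w) - ln 2))
    <= U (ln n%:R).
Proof.
set t := ln n%:R => -[t_gt0 Q_gt0 Q_le t_le F_le] /andP[w_gt0 w_le_n] w_le.
have n_gt0 := natr_gt0_of_ln_gt0 t_gt0.
have M_gt0 : 0 < M t := expR_gt0 _.
have [small|large] := leP (w%:R * t) (M t * ln 2 / 8).
- have Q_bound : 0 <= Q t <= M t by rewrite (ltW Q_gt0) Q_le.
  apply: le_trans (term_le_small_w M_gt0 Q_bound w_gt0
                     (binR_le_expR_ln R n w n_gt0) small t_le) _.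
  by rewrite /U lerDl expR_ge0.
- have Q_bound : 0 < Q t <= M t by rewrite Q_gt0 Q_le.
  have lnw_le : ln w%:R <= t by rewrite ler_ln ?posrE ?ltr0n ?(leq_trans w_gt0) // ler_nat.
  apply: le_trans (term_le_large_w t_gt0 M_gt0 Q_bound w_gt0 lnw_le
                     (binR_le_expR_ln_ediv R n w n_gt0 w_gt0) large w_le) _.
  apply: le_trans (_ : expR (- (gam / 2 * M t)) <= _); last first.
    by rewrite /U lerDr addr_ge0 ?expR_ge0.
  by rewrite ler_expR -mulNr [X in _ <= X]mulrC ler_pM2l.
Qed.

Let lemma11_sum_le (n : nat) : admissible (ln n%:R) ->
  lemma11_sum alpha beta lam k n <= n%:R * U (ln n%:R).
Proof.
set t := ln n%:R => adm; have [t_gt0 Q_gt0 Q_le _ _] := adm.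
have n_gt0 := natr_gt0_of_ln_gt0 t_gt0.
have ln2_gt0 := ln2_gt0 R.
have mE : mval alpha beta n = M t.
  by rewrite /mval /powR pnatr_eq0 eqn0Ngt n_gt0 /M /L expRD lnK ?posrE // mulrC.
have log2E : log2 (M t) = L t / ln 2 by rewrite /log2 /M expRK.
have epsE : 2 * (k * (L t / ln 2) ^+ 2) / M t = Q t / M t.
  by rewrite /Q; field; rewrite !gt_eqF ?expR_gt0.
have U_ge0 : 0 <= U t by rewrite /U !addr_ge0 ?expR_ge0.
rewrite /lemma11_sum /= mE log2E epsE big_mkcond /=.
apply: le_trans (_ : \sum_(1 <= w < n.+1) U t <= _); last first.
  by rewrite sumr_const_nat subSS subn0 mulr_natl.
apply: ler_sum_nat => w /andP[w_gt0 w_lt]; case: ifP => [w_le|_]; last exact: U_ge0.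
have eps_le1 : Q t / M t <= 1 by rewrite ler_pdivrMr ?expR_gt0 // mul1r.
rewrite pow2_powR_expR; last by rewrite ltr_pwDl // exprn_ge0 // subr_ge0.
apply: lemma11_term_le => //; first by rewrite w_gt0 -ltnS.
by move: w_le; rewrite /log2 invf_div mulrA.
Qed.

Lemma lemma11_sum_cvg0 : lemma11_sum alpha beta lam k @ \oo --> 0.
Proof.
apply/cvgrPdist_le => e e_gt0.
have near_good : \forall t \near +oo, admissible t /\ expR t * U t <= e.
  by near=> t; split; near: t; [exact: near_admissible | exact: near_expR_U_le].
near=> n.
have [adm U_le] : admissible (ln n%:R) /\ expR (ln n%:R) * U (ln n%:R) <= e.
  by near: n; exact: (near_ln_natr near_good).
have [t_gt0 _ _ _ _] := adm.
rewrite sub0r normrN ger0_norm ?lemma11_sum_ge0 //.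
apply: le_trans (lemma11_sum_le n adm) _.
by rewrite lnK ?posrE ?ltr0n ?(natr_gt0_of_ln_gt0 t_gt0) in U_le.
Unshelve. all: end_near.
Qed.

End Lemma11Sum.

Arguments lemma11_sum_cvg0 {R alpha beta k lam}.

Theorem lemma11 (R : realType) (alpha beta delta lambda k : R) :
  0 < alpha < 1 -> 0 < beta < 1 -> 0 < delta < 1 ->
  lambda < log2 (1 + delta) / (1 - beta) ->
  0 < k ->
  lemma11_sum alpha beta lambda k @ \oo --> 0.
Proof.
move=> /andP[alpha_gt0 _] /andP[beta_gt0 beta_lt1] /andP[delta_gt0 delta_lt1].
move=> lambda_lt k_gt0.
have ln2_gt0 := ln2_gt0 R.
set lam_star := log2 (1 + delta) / (1 - beta).
have lam_star_gt0 : 0 < lam_star.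
  by rewrite !divr_gt0 ?subr_gt0 // ln_gt0 // ltrDl.
have lam_star_lt : lam_star * (1 - beta) < 1.
  rewrite divfK ?gt_eqF ?subr_gt0 // ltr_pdivrMr // mul1r.
  by rewrite ltr_ln ?posrE ?ltrD2l ?addr_gt0.
set lam := Num.max lambda (lam_star / 2).
have lam_gt0 : 0 < lam by rewrite lt_max divr_gt0 ?orbT.
have lam_lt : lam * (1 - beta) < 1.
  have half_le : lam_star / 2 <= lam_star by lra.
  apply: le_lt_trans lam_star_lt; apply: ler_wpM2r; first by rewrite subr_ge0 ltW.
  by rewrite ge_max (ltW lambda_lt) half_le.
apply: (squeeze_cvgr _ (cvg_cst 0)
          (lemma11_sum_cvg0 alpha_gt0 beta_gt0 k_gt0 lam_gt0 lam_lt)).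
by apply: nearW => n; rewrite lemma11_sum_ge0 lemma11_sum_le_lambda ?(ltW alpha_gt0) ?le_max ?lexx.
Qed.
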